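(* Let $K$ be a field, $S=K[x_1,\dots,x_n]$, $A\subseteq\{1,\dots,n\}$ and $f=\prod_{j\in A}x_j$. In any Stanley decomposition of $S_f$, the number of Stanley spaces of maximal dimension (among the spaces of that decomposition) is equal to $2^{|A|}$.
   Context: $S_f=K[x_1,\dots,x_n,x_j^{-1}:j\in A]$ with $K$-basis the monomials $x_1^{a_1}\cdots x_n^{a_n}$, $a_j\in\mathbb Z$ for $j\in A$, $a_j\in\mathbb N$ otherwise. A Stanley space of $S_f$ is $uK[Z]$, the $K$-span of the monomials $uw$ ($w$ a monomial in the elements of $Z$), where $u$ is a monomial, $Z\subseteq\{x_1,\dots,x_n\}\cup\{x_j^{-1}:j\in A\}$ with $\{x_j,x_j^{-1}\}\not\subseteq Z$ for all $j\in A$, and $uK[Z]$ is a free $K[Z]$-module; its dimension is $|Z|$. A Stanley decomposition of $S_f$ is an expression of $S_f$ as a finite direct sum (of $K$-vector spaces) of Stanley spaces. *)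

From HB Require Import structures.
From mathcomp Require Import all_boot all_order all_algebra.
Set Implicit Arguments. Unset Strict Implicit. Unset Printing Implicit Defensive.
Import Order.TTheory GRing.Theory Num.Theory.
Local Open Scope ring_scope.

(* Monomials of K[x_1..x_n, x_1^-1..x_n^-1] are identified with their
   exponent vectors a : 'I_n -> int  (x^a = x_1^{a_1} ... x_n^{a_n}). *)
Definition mon (n : nat) := {ffun 'I_n -> int}.

(* a is the exponent vector of a monomial of S_f, f = prod_{j in A} x_j:
   a_j in Z for j in A, a_j in N otherwise. *)
Definition in_Sf (n : nat) (A : {set 'I_n}) (a : mon n) : Prop :=
  forall i : 'I_n, i \notin A -> 0 <= a i.

(* Elements of the Laurent polynomial ring K[x^{+-1}] are finitely supported
   coefficient functions p : mon n -> K (p = sum_a p(a) x^a). *)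
Definition fin_supp (K : fieldType) (n : nat) (p : mon n -> K) : Prop :=
  exists s : seq (mon n), forall a, a \notin s -> p a = 0.

Definition kspan (K : fieldType) (n : nat) (P : mon n -> Prop) (p : mon n -> K)
  : Prop := fin_supp p /\ forall a, ~ P a -> p a = 0.

Definition in_Sf_elt (K : fieldType) (n : nat) (A : {set 'I_n}) (p : mon n -> K)
  : Prop := kspan (@in_Sf n A) p.

(* Data of a Stanley space u K[Z]: u a monomial, Z = {x_i : i in Zp} u
   {x_j^{-1} : j in Zn}. *)
Record stanley_data (n : nat) := StanleyData {
  st_u : mon n;
  st_Zp : {set 'I_n};
  st_Zn : {set 'I_n} }.

(* Well-formedness: u is a monomial of S_f, the x_j^{-1} in Z have j in A,
   and {x_j, x_j^{-1}} is never contained in Z.  (Freeness of u K[Z] over K[Z]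
   is automatic under these conditions.) *)
Definition is_stanley_space (n : nat) (A : {set 'I_n}) (D : stanley_data n)
  : Prop :=
  [/\ in_Sf A (st_u D), st_Zn D \subset A & [disjoint st_Zp D & st_Zn D]].

(* a is the exponent of a monomial u*w with w a monomial in the elements of Z. *)
Definition in_stanley (n : nat) (D : stanley_data n) (a : mon n) : Prop :=
  forall i : 'I_n,
    if i \in st_Zp D then st_u D i <= a i
    else if i \in st_Zn D then a i <= st_u D i
    else a i == st_u D i.

Definition in_stanley_space (K : fieldType) (n : nat) (D : stanley_data n)
  (p : mon n -> K) : Prop := kspan (in_stanley D) p.

Definition sdim (n : nat) (D : stanley_data n) : nat :=
  #|st_Zp D| + #|st_Zn D|.

(* S_f is the (internal) direct sum of the K-subspaces given by D i, i < m:
   each space lies in S_f, and every element of S_f is uniquely a sum of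
   elements of the spaces. *)
Definition stanley_decomposition (K : fieldType) (n : nat) (A : {set 'I_n})
  (m : nat) (D : 'I_m -> stanley_data n) : Prop :=
  (forall i (p : mon n -> K), in_stanley_space (D i) p -> in_Sf_elt A p) /\
  (forall p : mon n -> K, in_Sf_elt A p ->
     exists q : 'I_m -> mon n -> K,
       (forall i, @in_stanley_space K n (D i) (q i)) /\
       (forall a, p a = \sum_(i < m) q i a)) /\
  (forall q q' : 'I_m -> mon n -> K,
     (forall i, @in_stanley_space K n (D i) (q i)) ->
     (forall i, @in_stanley_space K n (D i) (q' i)) ->
     (forall a, \sum_(i < m) q i a = \sum_(i < m) q' i a) ->
     forall i a, q i a = q' i a).

From HB Require Import structures.
From mathcomp Require Import all_boot all_order all_algebra.
From mathcomp Require Import zify.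
From Stdlib Require Import Classical.
Set Implicit Arguments. Unset Strict Implicit. Unset Printing Implicit Defensive.
Import Order.TTheory GRing.Theory Num.Theory.
Local Open Scope ring_scope.

(* In a Stanley decomposition every monomial of S_f lies in exactly one of the
   spaces (test the decomposition on the monomial itself).  A space u K[Z] has
   dimension n exactly when Z contains, for every k, one of x_k, x_k^{-1}; for
   a bound T exceeding all exponents of all the u's, such a space contains the
   "corner" monomial with exponent -T at the k with x_k^{-1} in Z and +T
   elsewhere, and no other space contains it.  The corners lying in S_f are
   those whose negative coordinates lie in A, so the spaces of dimension n are
   in bijection with the subsets of A; in particular n is the maximal
   dimension. *)

Definition mon_indicator (K : fieldType) (n : nat) (a : mon n) : mon n -> K :=
  fun b => (b == a)%:R.

Lemma kspan_mon_indicator (K : fieldType) (n : nat) (P : mon n -> Prop) a :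
  P a -> kspan P (mon_indicator K a).
Proof.
move=> Pa; split.
  by exists [:: a] => b; rewrite inE /mon_indicator => /negbTE ->.
by move=> b nPb; rewrite /mon_indicator; case: eqP => // eq_ba; rewrite eq_ba in nPb.
Qed.

Lemma kspan0 (K : fieldType) (n : nat) (P : mon n -> Prop) :
  kspan P (fun _ => 0 : K).
Proof. by split; [exists [::] |]. Qed.

Section StanleyDecomposition.
Variables (K : fieldType) (n : nat) (A : {set 'I_n}) (m : nat).
Variable D : 'I_m -> stanley_data n.
Hypothesis hdec : stanley_decomposition K A D.

Lemma stanley_decomposition_cover a :
  in_Sf A a -> exists i, in_stanley (D i) a.
Proof.
move=> Sf_a; case: hdec => _ [hsum _].
have [|q [q_in q_sum]] := hsum (mon_indicator K a); first exact: kspan_mon_indicator.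
have /eqP sum_ne0 : \sum_(i < m) q i a != 0.
  by rewrite -q_sum /mon_indicator eqxx oner_neq0.
apply: NNPP => /not_ex_all_not notin; apply: sum_ne0; apply: big1 => i _.
by case: (q_in i) => _; apply.
Qed.

Lemma stanley_decomposition_uniq a i j :
  in_stanley (D i) a -> in_stanley (D j) a -> i = j.
Proof.
move=> ai aj; apply: NNPP => neq_ij; case: hdec => _ [_ huniq].
pose single (k l : 'I_m) := if l == k then mon_indicator K a else fun _ => 0.
have single_in k :
    in_stanley (D k) a -> forall l, in_stanley_space (D l) (single k l).
  move=> ak l; rewrite /in_stanley_space /single.
  by case: eqVneq => [->|_]; [exact: kspan_mon_indicator | exact: kspan0].
have sum_single k b : \sum_(l < m) single k l b = mon_indicator K a b.
  rewrite (bigD1 k) //= big1 => [|l /negbTE neq_lk]; last by rewrite /single neq_lk.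
  by rewrite /single eqxx addr0.
have := huniq _ _ (single_in i ai) (single_in j aj)
  (fun b => etrans (sum_single i b) (esym (sum_single j b))) i a.
by rewrite /single eqxx (introF eqP neq_ij) /mon_indicator eqxx => /eqP; rewrite oner_eq0.
Qed.

End StanleyDecomposition.

Lemma sdim_leqif (n : nat) (D : stanley_data n) :
  [disjoint st_Zp D & st_Zn D] ->
  (sdim D <= n ?= iff (st_Zp D == ~: st_Zn D))%N.
Proof.
rewrite disjoints_subset => /subset_leqif_cards le_Zp.
rewrite -[X in (_ <= X ?= iff _)%N](card_ord n) -(cardsC (st_Zn D)) addnC /sdim.
by have := leqif_add le_Zp (leqif_eq (leqnn #|st_Zn D|)); rewrite eqxx andbT.
Qed.

Definition corner (n T : nat) (N : {set 'I_n}) : mon n :=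
  [ffun k => if k \in N then - T%:Z else T%:Z].

Lemma in_Sf_corner (n T : nat) (A N : {set 'I_n}) :
  N \subset A -> in_Sf A (corner T N).
Proof.
by move=> sNA k kA; rewrite ffunE (contraNF (subsetP sNA k) kA).
Qed.

Lemma in_stanley_corner (n T : nat) (D : stanley_data n) (N : {set 'I_n}) :
  (forall k, absz (st_u D k) < T)%N -> [disjoint st_Zp D & st_Zn D] ->
  in_stanley D (corner T N) <-> st_Zp D = ~: N /\ st_Zn D = N.
Proof.
move=> u_lt disjZ; split=> [in_D | [Zp_eq Zn_eq] k]; last first.
  by rewrite Zp_eq Zn_eq inE ffunE; have := u_lt k; case: (k \in N) => /=; lia.
suff memZ k : k \in st_Zp D = (k \notin N) /\ k \in st_Zn D = (k \in N).
  by split; apply/setP => k; rewrite ?inE; case: (memZ k).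
have := in_D k; have := u_lt k; rewrite ffunE.
have := disjointFr disjZ (x := k).
case: (k \in st_Zp D); case: (k \in st_Zn D); case: (k \in N) => //=;
  (by move=> _ _ _; split) || (move=> *; lia) || (by move=> /(_ isT)).
Qed.

Lemma mon_family_bounded (m n : nat) (u : 'I_m -> mon n) :
  exists T, forall i k, (absz (u i k) < T)%N.
Proof.
exists (\max_(i < m) \max_(k < n) absz (u i k)).+1 => i k; rewrite ltnS.
exact: leq_trans (leq_bigmax (F := fun k => absz (u i k)) k) (leq_bigmax i).
Qed.

Local Close Scope ring_scope.

Theorem corollary6p6 (K : fieldType) (n : nat) (A : {set 'I_n}) (m : nat)
  (D : 'I_m -> stanley_data n)
  (hD : forall i, is_stanley_space A (D i))
  (hdec : stanley_decomposition K A D) :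
  #|[set i : 'I_m | sdim (D i) == \max_(k < m) sdim (D k)]| = 2 ^ #|A|.
Proof.
have disjZ i : [disjoint st_Zp (D i) & st_Zn (D i)] by case: (hD i).
have [T u_lt] := mon_family_bounded (fun i => st_u (D i)).
have corner_in i N :
    in_stanley (D i) (corner T N) <-> st_Zp (D i) = ~: N /\ st_Zn (D i) = N.
  exact: in_stanley_corner (u_lt i) (disjZ i).
have full_iff i : (sdim (D i) == n) = (st_Zp (D i) == ~: st_Zn (D i)).
  exact: (sdim_leqif (disjZ i)).2.
have full_corner (N : {set 'I_n}) :
    N \subset A -> exists2 i, sdim (D i) == n & st_Zn (D i) = N.
  move=> sNA; have [i /corner_in[Zp_i Zn_i]] :=
    stanley_decomposition_cover hdec (in_Sf_corner T sNA).
  by exists i; rewrite // full_iff Zp_i Zn_i.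
have -> : \max_(k < m) sdim (D k) = n.
  apply/eqP; rewrite eqn_leq; apply/andP; split.
    by apply/bigmax_leqP => i _; exact: (sdim_leqif (disjZ i)).1.
  have [i /eqP full_i _] := full_corner set0 (sub0set A).
  by rewrite -{1}full_i (leq_bigmax (F := fun k => sdim (D k))).
rewrite -card_powerset -(card_in_imset (f := fun i => st_Zn (D i))).
  apply: eq_card => N; rewrite powersetE; apply/imsetP/idP => [[i _ ->]|sNA].
    by case: (hD i).
  by have [i full_i <-] := full_corner N sNA; exists i; rewrite ?inE.
move=> i j; rewrite !inE !full_iff => /eqP Zp_i /eqP Zp_j eqZn.
apply: (stanley_decomposition_uniq hdec (a := corner T (st_Zn (D i)))).
  exact/corner_in.
by apply/corner_in; rewrite Zp_j eqZn.
Qed.
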